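(* Let $\mathscr{A}$ be a $C^*$-algebra with identity (not necessarily abelian) and let $\mathscr{X}$ be a right $\mathscr{A}$-module. Let $E, F\colon\mathscr{X}\to\mathscr{A}$ be $\mathscr{A}$-linear functions, and assume that $E$ is strong, i.e., there exists $w\in\mathscr{X}$ such that $E(w)$ is invertible in $\mathscr{A}$ ($E$ is not assumed bounded). Then the following are equivalent: (i) for all $x\in\mathscr{X}$, $E(x)=0$ implies $F(x)=0$; (ii) there exists $c\in\mathscr{A}$ such that $F(x)=cE(x)$ for all $x\in\mathscr{X}$.
   Context: A right $\mathscr{A}$-module $\mathscr{X}$ is a complex vector space with a right $\mathscr{A}$-action satisfying $(\alpha x)a=x(\alpha a)=\alpha(xa)$. A function $E\colon\mathscr{X}\to\mathscr{A}$ is $\mathscr{A}$-linear if it is additive and $E(\alpha x a)=\alpha E(x)a$ for all $x\in\mathscr{X}$, $\alpha\in\mathbb{C}$, $a\in\mathscr{A}$. *)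

From HB Require Import structures.
From mathcomp Require Import all_boot all_order all_algebra.
From mathcomp Require Import complex.
From mathcomp Require Import reals.
Set Implicit Arguments. Unset Strict Implicit. Unset Printing Implicit Defensive.
Import Order.TTheory GRing.Theory Num.Theory.
Local Open Scope ring_scope.

Definition is_Cstar_algebra (R : realType) (A : algType R[i])
    (star : A -> A) (nrm : A -> R) : Prop :=
  (forall x, 0 <= nrm x) /\
  (forall x, nrm x = 0 -> x = 0) /\
  (forall x y, nrm (x + y) <= nrm x + nrm y) /\
  (forall (a : R[i]) x, real_complex R (nrm (a *: x)) = `|a| * real_complex R (nrm x)) /\
  (forall x y, nrm (x * y) <= nrm x * nrm y) /\
  (forall x y, star (x + y) = star x + star y) /\
  (forall (a : R[i]) x, star (a *: x) = (Num.conj a) *: star x) /\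
  (forall x y, star (x * y) = star y * star x) /\
  (forall x, star (star x) = x) /\
  (forall x, nrm (star x * x) = nrm x ^+ 2) /\
  (forall u : nat -> A,
      (forall e : R, 0 < e -> exists N : nat, forall m n : nat,
          (N <= m)%N -> (N <= n)%N -> nrm (u m - u n) < e) ->
      exists l : A, forall e : R, 0 < e -> exists N : nat, forall n : nat,
          (N <= n)%N -> nrm (u n - l) < e).

Definition is_right_module (R : realType) (A : algType R[i]) (X : lmodType R[i])
    (act : X -> A -> X) : Prop :=
  (forall x y a, act (x + y) a = act x a + act y a) /\
  (forall x a b, act x (a + b) = act x a + act x b) /\
  (forall x a b, act x (a * b) = act (act x a) b) /\
  (forall (alpha : R[i]) x a, act (alpha *: x) a = act x (alpha *: a)) /\
  (forall (alpha : R[i]) x a, act x (alpha *: a) = alpha *: act x a).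

Definition A_linear (R : realType) (A : algType R[i]) (X : lmodType R[i])
    (act : X -> A -> X) (E : X -> A) : Prop :=
  (forall x y, E (x + y) = E x + E y) /\
  (forall (alpha : R[i]) x a, E (act (alpha *: x) a) = (alpha *: E x) * a).

Definition strong (R : realType) (A : algType R[i]) (X : lmodType R[i])
    (E : X -> A) : Prop :=
  exists w : X, exists b : A, E w * b = 1 /\ b * E w = 1.

From HB Require Import structures.
From mathcomp Require Import all_boot all_order all_algebra.
From mathcomp Require Import complex.
From mathcomp Require Import reals.
Set Implicit Arguments. Unset Strict Implicit. Unset Printing Implicit Defensive.
Import GRing.Theory.
Local Open Scope ring_scope.

(* If [E w * b = 1], every [x] splits as [x = (x - w (b E x)) + w (b E x)] with
   the first summand in the kernel of [E]; a functional [F] vanishing on that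
   kernel therefore satisfies [F x = F (w (b E x)) = (F w b) E x]. *)

Section ALinear.

Variables (R : realType) (A : algType R[i]) (X : lmodType R[i]).
Variables (act : X -> A -> X) (E : X -> A).
Hypothesis E_lin : A_linear act E.

Lemma A_linear0 : E 0 = 0.
Proof.
have E00 := E_lin.1 0 0; rewrite addr0 in E00.
by apply: (addrI (E 0)); rewrite -E00 addr0.
Qed.

Lemma A_linearB (x y : X) : E (x - y) = E x - E y.
Proof.
have EyNy := E_lin.1 y (- y); rewrite subrr A_linear0 in EyNy.
have EN : E (- y) = - E y by apply/eqP; rewrite -addr_eq0 addrC -EyNy.
by rewrite E_lin.1 EN.
Qed.

Lemma A_linear_act (x : X) (a : A) : E (act x a) = E x * a.
Proof. by rewrite -[x]scale1r E_lin.2 !scale1r. Qed.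

End ALinear.

Section Factorization.

Variables (R : realType) (A : algType R[i]) (X : lmodType R[i]).
Variables (act : X -> A -> X) (E F : X -> A).
Hypotheses (E_lin : A_linear act E) (F_lin : A_linear act F).
Variables (w : X) (b : A).
Hypothesis Ewb : E w * b = 1.

Lemma A_linear_kernel_split (x : X) : E (x - act w (b * E x)) = 0.
Proof. by rewrite (A_linearB E_lin) (A_linear_act E_lin) mulrA Ewb mul1r subrr. Qed.

Lemma A_linear_factor (x : X) :
  (forall y, E y = 0 -> F y = 0) -> F x = F w * b * E x.
Proof.
move=> kerEF; apply/eqP; rewrite -subr_eq0 -mulrA -(A_linear_act F_lin).
by rewrite -(A_linearB F_lin) kerEF ?A_linear_kernel_split.
Qed.

End Factorization.

Theorem theorem4p4 (R : realType) (A : algType R[i]) (star : A -> A) (nrm : A -> R)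
    (X : lmodType R[i]) (act : X -> A -> X) (E F : X -> A) :
  is_Cstar_algebra star nrm ->
  is_right_module act ->
  A_linear act E -> A_linear act F ->
  strong E ->
  ((forall x : X, E x = 0 -> F x = 0) <->
   (exists c : A, forall x : X, F x = c * E x)).
Proof.
move=> _ _ E_lin F_lin [w [b [Ewb _]]]; split.
- move=> kerEF; exists (F w * b) => x.
  exact: (A_linear_factor E_lin F_lin Ewb x kerEF).
- by move=> [c Fc] x Ex0; rewrite Fc Ex0 mulr0.
Qed.
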